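(* Let $\tau$ be the usual topology on $\mathbb{R}$ and let $\rho=\{U\setminus E : U\in\tau,\ E\subseteq\mathbb{R}\text{ countable}\}$. Then $(\mathbb{R},\rho)$ is a topological space that is Hausdorff, not regular, Menger and totally Lindelöf, but is not an Alster space.
   Context: A filter base on a set $X$ is a nonempty family $\mathcal{F}\subseteq\mathcal{P}(X)$ with $\emptyset\notin\mathcal{F}$ and closed under pairwise intersections. It is stable under countable intersections if for every countable $S\subseteq\mathcal{F}$ there is $H\in\mathcal{F}$ with $H\subseteq\bigcap S$. $ad(\mathcal{F})=\bigcap\{\overline{F}:F\in\mathcal{F}\}$. A filter base $\mathcal{F}$ on $X$ is total if every filter base $\mathcal{H}\supseteq\mathcal{F}$ satisfies $ad(\mathcal{H})\neq\emptyset$. $X$ is totally Lindelöf if every filter base stable under countable intersections is contained in a total filter base stable under countable intersections. An Alster covering of $X$ is a family of $G_\delta$ subsets of $X$ (countable intersections of open sets) such that every compact subset of $X$ is contained in one of its members; $X$ is Alster if every Alster covering has a countable subcover. $X$ is Menger if for every sequence $\langle\mathcal{A}_n:n<\omega\rangle$ of open covers of $X$ there are finite $\mathcal{C}_n\subseteq\mathcal{A}_n$ with $\bigcup_n\bigcup\mathcal{C}_n=X$. *)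

From HB Require Import structures.
From mathcomp Require Import all_boot all_order all_algebra.
From mathcomp Require Import all_classical all_reals topology normedtype.
Set Implicit Arguments. Unset Strict Implicit. Unset Printing Implicit Defensive.
Import Order.TTheory GRing.Theory Num.Theory.
Import numFieldTopology.Exports.
Local Open Scope classical_set_scope.

Section GenTop.
Variable T : Type.
Variable op : set (set T).
Implicit Types (A B K : set T) (C D F S : set (set T)).

Definition is_topology : Prop :=
  [/\ op setT, op set0,
      (forall A B, op A -> op B -> op (A `&` B)) &
      (forall C, C `<=` op -> op (\bigcup_(A in C) A))].

Definition closure_in A : set T :=
  [set x | forall U, op U -> U x -> U `&` A !=set0].

Definition closed_in A : Prop := op (~` A).

Definition hausdorff_in : Prop :=
  forall x y : T, x <> y ->
    exists U V, [/\ op U, op V, U x, V y & U `&` V = set0].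

Definition regular_in : Prop :=
  forall (x : T) A, closed_in A -> ~ A x ->
    exists U V, [/\ op U, op V, U x, A `<=` V & U `&` V = set0].

Definition open_cover C : Prop := C `<=` op /\ setT `<=` \bigcup_(A in C) A.

Definition compact_in K : Prop :=
  forall C, C `<=` op -> K `<=` \bigcup_(A in C) A ->
    exists D, [/\ D `<=` C, finite_set D & K `<=` \bigcup_(A in D) A].

Definition menger_in : Prop :=
  forall A : nat -> set (set T), (forall n, open_cover (A n)) ->
    exists Cn : nat -> set (set T),
      (forall n, Cn n `<=` A n /\ finite_set (Cn n)) /\
      setT `<=` \bigcup_n \bigcup_(B in Cn n) B.

Definition Gdelta_in (G : set T) : Prop :=
  exists V : nat -> set T, (forall n, op (V n)) /\ G = \bigcap_n V n.

Definition alster_cover C : Prop :=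
  (forall G : set T, C G -> Gdelta_in G) /\
  (forall K, compact_in K -> exists G : set T, C G /\ K `<=` G).

Definition alster_in : Prop :=
  forall C, alster_cover C ->
    exists D, [/\ D `<=` C, countable D & setT `<=` \bigcup_(A in D) A].

Definition filter_base F : Prop :=
  [/\ F !=set0, ~ F set0 & forall A B, F A -> F B -> F (A `&` B)].

Definition countably_stable F : Prop :=
  forall S, S `<=` F -> countable S ->
    exists W : set T, F W /\ W `<=` \bigcap_(A in S) A.

Definition adherence F : set T := \bigcap_(A in F) closure_in A.

Definition total_in F : Prop :=
  forall H : set (set T), filter_base H -> F `<=` H -> adherence H !=set0.

Definition totally_lindelof_in : Prop :=
  forall F, filter_base F -> countably_stable F ->
    exists G : set (set T), [/\ filter_base G, countably_stable G, total_in G & F `<=` G].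

End GenTop.

Definition rho (R : realType) : set (set R) :=
  fun A => exists U E : set R, [/\ open U, countable E & A = U `\` E].

(* The whole proof rests on two facts about the line: nonempty
   open sets are uncountable (they have positive Lebesgue measure), and open
   families have countable subfamilies with the same union (rational
   intervals). *)

From mathcomp Require Import all_boot all_order all_algebra.
From mathcomp Require Import all_classical all_reals topology normedtype.
From mathcomp Require Import finmap lebesgue_measure.
Import Order.TTheory GRing.Theory Num.Theory.
Import numFieldTopology.Exports.
Local Open Scope classical_set_scope.
Local Open Scope ring_scope.

Set Implicit Arguments.
Unset Strict Implicit.
Unset Printing Implicit Defensive.

Lemma countableU T (A B : set T) :
  countable A -> countable B -> countable (A `|` B).
Proof.
move=> cA cB; rewrite -bigcup2inE; apply: bigcup_countable => //.
by move=> [|[|]].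
Qed.

Lemma uncountable_setD T (A E : set T) :
  ~ countable A -> countable E -> A `\` E !=set0.
Proof.
move=> nA cE; apply/set0P/negP => /eqP AE; apply: nA.
by apply: sub_countable cE; apply: subset_card_le; rewrite -setD_eq0 AE.
Qed.

Section MengerCovers.
Variable T : Type.
Implicit Types (A : nat -> set (set T)) (Y Z L : set T).

Definition menger_covers A Y : Prop :=
  exists Cn : nat -> set (set T),
    (forall n, Cn n `<=` A n /\ finite_set (Cn n)) /\
    Y `<=` \bigcup_n \bigcup_(B in Cn n) B.

Lemma menger_coversU A Y Z :
  menger_covers A Y -> menger_covers A Z -> menger_covers A (Y `|` Z).
Proof.
move=> [C1 [C1A C1Y]] [C2 [C2A C2Z]]; exists (fun n => C1 n `|` C2 n); split.
  move=> n; have [? ?] := C1A n; have [? ?] := C2A n.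
  by split; [rewrite subUset | rewrite finite_setU].
move=> x [/C1Y|/C2Z] [n _ [B CB Bx]]; exists n => //; exists B => //.
  by left.
by right.
Qed.

(* A countable set is covered by using one member of [A n] per point,
   the point being assigned to the stage [n] given by an injection into nat. *)
Lemma countable_menger_covers A L :
  (forall n, setT `<=` \bigcup_(B in A n) B) -> countable L -> menger_covers A L.
Proof.
move=> covA /countable_injP[g ginj].
have /choice[b Hb] : forall n, exists b : T -> set T, forall x, A n (b x) /\ b x x.
  move=> n; have /choice[b Hb] : forall x, exists B, A n B /\ B x.
    by move=> x; have [B ? ?] := covA n x I; exists B.
  by exists b.
exists (fun n => b n @` [set y | L y /\ g y = n]); split.
  move=> n; split; first by move=> _ [x _ <-]; case: (Hb n x).
  apply: finite_image.
  have [[y0 [Ly0 gy0]]|none] := pselect (exists y, L y /\ g y = n).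
    apply: (sub_finite_set _ (finite_set1 y0)) => y [Ly gy] /=.
    by apply: ginj; [exact: mem_set | exact: mem_set | rewrite gy gy0].
  by apply: (@sub_finite_set _ _ set0) => // y Py; apply: none; exists y.
move=> y Ly; exists (g y) => //; exists (b (g y) y); last by case: (Hb (g y) y).
by exists y.
Qed.

End MengerCovers.

Section FilterBases.
Variable T : Type.
Implicit Types (A B K E : set T) (F H : set (set T)).

(* The family of all sets containing a given point [c] is a countably stable
   filter base, total for every topology since [c] adheres to any finer base. *)
Lemma principal_total (op : set (set T)) (c : T) :
  [/\ filter_base (fun B => B c), countably_stable (fun B => B c)
    & total_in op (fun B => B c)].
Proof.
split; first by split; [exists setT | by [] | by move=> A B ? ?; split].
  by move=> S Sc _; exists [set c]; split => // x -> B /Sc.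
move=> H [_ H0 HI] cH; exists c => B HB U _ Uc; exists c; split => //.
have [x [Bx /= xc]] : B `&` [set c] !=set0.
  by apply/set0P/eqP => Bc0; apply: H0; rewrite -Bc0; apply: HI => //; exact: cH.
by rewrite -xc.
Qed.

(* Without a common point, members of a countably stable filter base are
   uncountable: a countable member could be intersected with one member
   missing each of its points. *)
Lemma free_stable_uncountable F : filter_base F -> countably_stable F ->
  (forall c, exists A, F A /\ ~ A c) -> forall A, F A -> ~ countable A.
Proof.
move=> [_ F0 _] Fcs /choice[a Ha] A0 FA0 cA0.
have [W [FW SW]] : exists W, F W /\ W `<=` \bigcap_(A in A0 |` a @` A0) A.
  apply: Fcs; first by move=> _ [->|[c _ <-]] //; case: (Ha c).
  apply: countableU; first exact: countable1.
  exact: sub_countable (card_image_le _ _) cA0.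
have [x Wx] : W !=set0 by apply/set0P/eqP => W0; apply: F0; rewrite -W0.
have A0x : A0 x by apply: (SW x Wx); left.
by case: (Ha x) => _; apply; apply: (SW x Wx); right; exists x.
Qed.

(* The sets containing [(A `&` K) `\` E] for some [A] in [F] and countable
   [E]: the trace of [F] on [K], made stable under removal of countable sets. *)
Definition cocountable_trace F K : set (set T) :=
  [set B | exists A E, [/\ F A, countable E & (A `&` K) `\` E `<=` B]].

Lemma sub_cocountable_trace F K : F `<=` cocountable_trace F K.
Proof. by move=> A FA; exists A, set0; split => // x [[]]. Qed.

Lemma cocountable_trace_filter_base F K : filter_base F ->
  (forall A, F A -> ~ countable (A `&` K)) -> filter_base (cocountable_trace F K).
Proof.
move=> [[A0 FA0] _ FI] FK; split.
- by exists A0; exact: sub_cocountable_trace.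
- move=> [A [E [FA cE sAKE]]]; have [x AKEx] := uncountable_setD (FK A FA) cE.
  exact: sAKE x AKEx.
- move=> B1 B2 [A1 [E1 [FA1 cE1 s1]]] [A2 [E2 [FA2 cE2 s2]]].
  exists (A1 `&` A2), (E1 `|` E2); split; [exact: FI | exact: countableU |].
  move=> x [[[A1x A2x] Kx] nEx]; split.
    by apply: s1; split => // E1x; apply: nEx; left.
  by apply: s2; split => // E2x; apply: nEx; right.
Qed.

(* Countable stability passes to the trace: intersect the countably many
   chosen members of [F] and remove the union of the countable sets. *)
Lemma cocountable_trace_stable F K :
  countably_stable F -> countably_stable (cocountable_trace F K).
Proof.
move=> Fcs S SG cS.
have /choice[p Hp] : forall B, exists p : set T * set T, cocountable_trace F K B ->
    [/\ F p.1, countable p.2 & (p.1 `&` K) `\` p.2 `<=` B].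
  move=> B; have [[A [E ?]]|nB] := pselect (cocountable_trace F K B).
    by exists (A, E).
  by exists (set0, set0) => /nB.
have [W [FW SW]] : exists W, F W /\ W `<=` \bigcap_(A in (fun B => (p B).1) @` S) A.
  apply: Fcs; first by move=> _ [B SB <-]; case: (Hp B (SG B SB)).
  exact: sub_countable (card_image_le _ _) cS.
exists ((W `&` K) `\` \bigcup_(B in S) (p B).2); split.
  exists W, (\bigcup_(B in S) (p B).2); split => //.
  by apply: bigcup_countable => // B SB; case: (Hp B (SG B SB)).
move=> x [[Wx Kx] nEx] B SB; have [_ _ sub] := Hp B (SG B SB).
apply: sub; split; first by split => //; apply: (SW x Wx); exists B.
by move=> ?; apply: nEx; exists B.
Qed.

End FilterBases.

Section RealLine.
Variable R : realType.
Implicit Types (U : set R).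

(* A nondegenerate open interval has positive Lebesgue measure. *)
Lemma itvoo_uncountable (a b : R) : a < b -> ~ countable `]a, b[.
Proof.
move=> ab /countable_lebesgue_measure0; rewrite lebesgue_measure_itv /=.
by rewrite lte_fin ab -EFinD => -[] /eqP; rewrite subr_eq0 gt_eqF.
Qed.

(* Nonempty open sets contain a nondegenerate interval. *)
Lemma open_uncountable U (x : R) : open U -> U x -> ~ countable U.
Proof.
move=> oU Ux; have : nbhs x U by exact: open_nbhs_nbhs.
rewrite -nbhs_ballE => -[e e0]; rewrite ball_itv => sU cU.
apply: (@itvoo_uncountable (x - e) (x + e)).
  by rewrite ltrBlDr -addrA ltrDl addr_gt0.
by apply: sub_countable cU; apply: subset_card_le.
Qed.

(* Lindelof property of the line: the members containing a rational interval
   ]p, q[ chosen once for each pair (p, q) already cover the union. *)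
Lemma open_lindelof (I : Type) (D : set I) (U : I -> set R) :
  (forall i, D i -> open (U i)) ->
  exists2 J, J `<=` D /\ countable J & \bigcup_(i in D) U i `<=` \bigcup_(i in J) U i.
Proof.
move=> oU; have [->|/set0P[i0 Di0]] := eqVneq D set0.
  by exists set0; [split=> //; exact: countable0 | rewrite bigcup_set0].
pose itv (pq : rat * rat) : set R := `]ratr pq.1, ratr pq.2[%classic.
pose P pq := exists2 i, D i & itv pq `<=` U i.
have /choice[h Hh] : forall pq, exists i, P pq -> D i /\ itv pq `<=` U i.
  move=> pq; have [[i Di sU]|nP] := pselect (P pq); first by exists i.
  by exists i0 => /nP.
exists (h @` P); first split.
- by move=> _ [pq Ppq <-]; case: (Hh pq Ppq).
- exact: sub_countable (card_image_le _ _) (countableP _).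
move=> x [i Di Uix]; have : nbhs x (U i) by apply: open_nbhs_nbhs; split => //; exact: oU.
rewrite -nbhs_ballE => -[e e0]; rewrite ball_itv => sU.
have /rat_in_itvoo[p] : x - e < x by rewrite ltrBlDr ltrDl.
have /rat_in_itvoo[q] : x < x + e by rewrite ltrDl.
rewrite !in_itv /= => /andP[xq qe] /andP[ep px].
have Ppq : P (p, q).
  exists i => // y; rewrite /itv /= !in_itv /= => /andP[py yq]; apply: sU.
  by rewrite /= in_itv /= (lt_trans ep py) (lt_trans yq qe).
exists (h (p, q)); first by exists (p, q).
by apply: (Hh _ Ppq).2; rewrite /itv /= in_itv /= px xq.
Qed.

Lemma closed_bigcap_balls (K : set R) : closed K ->
  K = \bigcap_(n in [set: nat]) \bigcup_(x in K) ball x n.+1%:R^-1.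
Proof.
move=> cK; apply/seteqP; split => [y Ky n _|y Ky].
  by exists y => //; apply: ballxx; rewrite invr_gt0.
apply: cK => B /nbhs_ballP[e e0 yeB].
have [n] := ltr_add_invr e0; rewrite add0r => ne.
have [x Kx xny] := Ky n I; exists x; split => //; apply: yeB.
by apply: (le_ball (ltW ne)); exact: ball_sym.
Qed.

Lemma stable_uncountable_bounded (F : set (set R)) : countably_stable F ->
  (forall A, F A -> ~ countable A) ->
  exists k : nat, forall A, F A -> ~ countable (A `&` `[- k%:R, k%:R]).
Proof.
move=> Fcs FA; apply: contrapT => nk.
have /choice[b Hb] : forall k : nat, exists A, F A /\ countable (A `&` `[- k%:R, k%:R]).
  move=> k; apply: contrapT => nb; apply: nk; exists k => A FA' cA.
  by apply: nb; exists A.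
have [W [FW SW]] : exists W, F W /\ W `<=` \bigcap_(A in range b) A.
  apply: Fcs; first by move=> _ [k _ <-]; case: (Hb k).
  exact: sub_countable (card_image_le _ _) (countableP _).
apply: (FA W FW); apply: sub_countable (subset_card_le _)
  (_ : countable (\bigcup_k (b k `&` `[- k%:R, k%:R]))).
  move=> x Wx; have /ltW := archi_boundP (normr_ge0 x); set k := Num.bound `|x| => xk.
  exists k => //; split; first by apply: (SW x Wx); exists k.
  by rewrite /= in_itv /= -ler_norml.
by apply: bigcup_countable => // k _; case: (Hb k).
Qed.

End RealLine.

Section Cocountable.
Variable R : realType.
Implicit Types (A B U E : set R) (C : set (set R)).
Local Notation rho := (@rho R).

Lemma open_rho U : open U -> rho U.
Proof. by move=> oU; exists U, set0; rewrite setD0. Qed.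

Lemma cocountable_rho E : countable E -> rho (~` E).
Proof. by move=> cE; exists setT, E; rewrite setTD; split => //; exact: openT. Qed.

Lemma rho_repr : exists f : set R -> set R * set R, forall A, rho A ->
  [/\ open (f A).1, countable (f A).2 & A = (f A).1 `\` (f A).2].
Proof.
have /choice[f Hf] : forall A, exists p : set R * set R, rho A ->
    [/\ open p.1, countable p.2 & A = p.1 `\` p.2].
  move=> A; have [[U [E ?]]|nA] := pselect (rho A); first by exists (U, E).
  by exists (set0, set0) => /nA.
by exists f.
Qed.

Lemma rhoI A B : rho A -> rho B -> rho (A `&` B).
Proof.
move=> [U1 [E1 [oU1 cE1 ->]]] [U2 [E2 [oU2 cE2 ->]]].
exists (U1 `&` U2), (E1 `|` E2); split; [exact: openI | exact: countableU |].
apply/seteqP; split => x /=; first by move=> [[? ?] [? ?]]; split => //; case.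
by move=> [[? ?] nE]; split; split => // ?; apply: nE; [left|right].
Qed.

(* The union Y of a family of sets U_A \ E_A differs from the open set
   V = \bigcup U_A by a subset of the union of countably many E_A, taken along
   a countable subfamily given by the Lindelof property. *)
Lemma rho_bigcup C : C `<=` rho -> rho (\bigcup_(A in C) A).
Proof.
move=> Crho; have [f Hf] := rho_repr.
have oU A : C A -> open (f A).1 by move=> /Crho/Hf[].
have cE A : C A -> countable (f A).2 by move=> /Crho/Hf[].
have eA A : C A -> A = (f A).1 `\` (f A).2 by move=> /Crho/Hf[].
have [J [JC cJ] cover] := open_lindelof oU.
set Y := \bigcup_(A in C) A; set V := \bigcup_(A in C) (f A).1.
have YV : Y `<=` V by move=> x [A CA]; rewrite (eA A CA) => -[fAx _]; exists A.
exists V, (V `\` Y); split; first exact: bigcup_open.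
  apply: sub_countable (subset_card_le _) (_ : countable (\bigcup_(A in J) (f A).2)).
    move=> x [/cover[A JA fAx] nYx]; apply: contrapT => nEx; apply: nYx.
    exists A; first exact: JC.
    by rewrite (eA A (JC A JA)); split => // fA2x; apply: nEx; exists A.
  by apply: bigcup_countable => // A /JC; exact: cE.
by rewrite setDD setIidr.
Qed.

Lemma rho_topology : is_topology rho.
Proof.
by split; [exact/open_rho/openT | exact/open_rho/open0 | exact: rhoI | exact: rho_bigcup].
Qed.

(* rho refines the Hausdorff Euclidean topology. *)
Lemma rho_hausdorff : hausdorff_in rho.
Proof.
suff sep a b : a < b -> exists U V, [/\ rho U, rho V, U a, V b & U `&` V = set0].
  move=> x y /eqP; rewrite neq_lt => /orP[/sep//|/sep[U [V [? ? ? ? UV]]]].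
  by exists V, U; rewrite setIC.
move=> ab; pose m := (a + b) / 2.
exists [set z | z < m], [set z | m < z]; split.
- exact/open_rho/open_lt.
- exact/open_rho/open_gt.
- by rewrite /= midf_lt.
- by rewrite /= midf_lt.
- by apply/seteqP; split => z //= [zm mz]; have := lt_trans zm mz; rewrite ltxx.
Qed.

(* Two rho-open sets whose open parts meet do meet: the open intersection is
   uncountable.  This is what destroys regularity. *)
Lemma rho_meet U V E E' : open U -> open V -> countable E -> countable E' ->
  U `&` V !=set0 -> (U `\` E) `&` (V `\` E') !=set0.
Proof.
move=> oU oV cE cE' [x UVx].
have [z [[Uz Vz] nEz]] := uncountable_setD (open_uncountable (openI oU oV) UVx)
  (countableU cE cE').
by exists z; split; split => // ?; apply: nEz; [left|right].
Qed.

(* The nonzero rationals form a rho-closed set A missing 0, but every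
   rho-neighbourhood of 0 meets every rho-open set containing A. *)
Lemma rho_not_regular : ~ regular_in rho.
Proof.
pose A := [set x : R | x != 0 /\ exists r : rat, x = ratr r].
have cA : countable A.
  apply: sub_countable (subset_card_le _) (_ : countable (ratr @` [set: rat])).
    by move=> x [_ [r ->]]; exists r.
  exact: sub_countable (card_image_le _ _) (countableP _).
move=> /(_ 0 A (cocountable_rho cA)) []; first by case=> /eqP.
move=> _ [_ [[U [E [oU cE ->]]] [V [E' [oV cE' ->]]] [U0 _] AV UV]].
have : nbhs 0 U by apply: open_nbhs_nbhs.
rewrite -nbhs_ballE => -[e e0]; rewrite ball_itv => sU.
have /rat_in_itvoo[r] : 0 < e by [].
rewrite in_itv /= => /andP[r0 re].
have Ar : A (ratr r) by split; [rewrite gt_eqF | exists r].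
have UVr : (U `&` V) (ratr r).
  split; last by case: (AV _ Ar).
  by apply: sU; rewrite /= in_itv /= sub0r add0r re (lt_trans _ r0) // oppr_lt0.
by have := rho_meet oU oV cE cE' (ex_intro _ _ UVr); rewrite UV => -[].
Qed.

(* Finite sets are closed, hence G_delta, already for the usual topology. *)
Lemma finite_rho_Gdelta K : finite_set K -> Gdelta_in rho K.
Proof.
move=> fK; exists (fun n => \bigcup_(x in K) ball x n.+1%:R^-1); split.
  by move=> n; apply/open_rho/bigcup_open => x _; exact: ball_open.
apply: closed_bigcap_balls.
exact: (accessible_finite_set_closed.1 (hausdorff_accessible (@Rhausdorff R))).
Qed.

(* Countable subsets of rho-compact sets are finite: the rho-open sets
   ~` (D \ x), x in D, together with ~` D cover [K], each meeting [D] in at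
   most one point. *)
Lemma rho_compact_countable_finite K D :
  compact_in rho K -> D `<=` K -> countable D -> finite_set D.
Proof.
move=> cK DK cD.
pose C0 := ~` D |` [set ~` (D `\` [set x]) | x in D].
have C0rho : C0 `<=` rho.
  move=> _ [->|[x _ <-]]; apply: cocountable_rho => //.
  by apply: sub_countable (subset_card_le _) cD => z [].
have KC0 : K `<=` \bigcup_(O in C0) O.
  move=> y _; have [Dy|nDy] := pselect (D y); last by exists (~` D); [left|].
  by exists (~` (D `\` [set y])); [right; exists y | move=> [_]; apply].
have [D' [D'C0 fD' KD']] := cK C0 C0rho KC0.
apply: sub_finite_set (bigcup_finite fD' (F := fun O => O `&` D) _).
  by move=> x Dx; have [O D'O Ox] := KD' x (DK x Dx); exists O.
move=> O /D'C0[->|[x _ <-]]; first by rewrite setICl.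
apply: (sub_finite_set _ (finite_set1 x)) => z [nz Dz] /=.
by apply: contrapT => zx; apply: nz.
Qed.

(* An infinite set would contain a countably infinite subset. *)
Lemma rho_compact_finite K : compact_in rho K -> finite_set K.
Proof.
move=> cK; apply: contrapT => /infiniteP/card_subP[D DN DK].
have cD : countable D by move: DN; rewrite card_eq_le => /andP[].
have iD : infinite_set D by rewrite (eq_finite_set DN); exact: infinite_nat.
exact/iD/(rho_compact_countable_finite cK DK cD).
Qed.

(* The countable rho-G_delta sets cover all (finite) compact sets, but
   countably many of them only cover a countable set. *)
Lemma rho_not_alster : ~ alster_in rho.
Proof.
move=> /(_ [set G | Gdelta_in rho G /\ countable G]) [].
  split=> [G []//|K /rho_compact_finite fK].
  exists K; split => //; split; first exact: finite_rho_Gdelta.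
  exact: finite_set_countable.
move=> D [DC cD TD]; apply: (open_uncountable (@openT R) (I : setT 0)).
apply: sub_countable (subset_card_le TD) _.
by apply: bigcup_countable => // A /DC[].
Qed.

(* Compactness of [-n, n] for the usual topology lets finitely many members
   of [A n] cover [-n, n] up to the countably many points removed from them. *)
Lemma rho_menger_cocountable (A : nat -> set (set R)) :
  (forall n, open_cover rho (A n)) -> exists2 L, countable L & menger_covers A (~` L).
Proof.
move=> covA; have [f Hf] := rho_repr.
have oU n B : A n B -> open (f B).1 by move=> /(covA n).1/Hf[].
have cE n B : A n B -> countable (f B).2 by move=> /(covA n).1/Hf[].
have eB n B : A n B -> B = (f B).1 `\` (f B).2 by move=> /(covA n).1/Hf[].
have /choice[X HX] : forall n : nat, exists X, [/\ X `<=` A n, finite_set X &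
    `[- n%:R, n%:R]%classic `<=` \bigcup_(B in X) (f B).1].
  move=> n; have := @segment_compact R (- n%:R) n%:R; rewrite compact_cover.
  move=> /(_ _ (A n) (fun B => (f B).1) (oU n)) [y _|X XA cov].
    have [B AB By] := (covA n).2 y I; exists B => //.
    by move: By; rewrite {1}(eB n B AB) => -[].
  exists [set` X]; split => //.
  by move=> B /XA; rewrite in_setE.
exists (\bigcup_n \bigcup_(B in X n) (f B).2).
  apply: bigcup_countable => // n _; have [XA fX _] := HX n.
  by apply: bigcup_countable; [exact: finite_set_countable | move=> B /XA/cE].
exists X; split=> [n|y nLy]; first by have [] := HX n.
have /ltW := archi_boundP (normr_ge0 y); set k := Num.bound `|y| => yk.
have [_ _ /(_ y)[|B XkB fBy]] := HX k; first by rewrite /= in_itv /= -ler_norml.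
exists k => //; exists B => //; have [XA _ _] := HX k.
rewrite (eB k B (XA B XkB)); split => // Ey.
by apply: nLy; exists k => //; exists B.
Qed.

(* The leftover countable set is covered by one member per stage. *)
Lemma rho_menger : menger_in rho.
Proof.
move=> A covA; have [L cL covL] := rho_menger_cocountable covA.
have covAT n : setT `<=` \bigcup_(B in A n) B by case: (covA n).
have := menger_coversU covL (countable_menger_covers covAT cL).
by rewrite setvU.
Qed.

(* A filter base with members inside [K \ E] for every countable [E] has a
   usual cluster point in the compact set [K]; since its members avoid any
   prescribed countable set, that point also adheres to it for [rho]. *)
Lemma rho_adherence_compact K (H : set (set R)) : compact K -> filter_base H ->
  (forall E, countable E -> exists2 B, H B & B `<=` K `\` E) -> adherence rho H !=set0.
Proof.
move=> cK [[B0 HB0] H0 HI] HK.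
have fH : Filter (filter_from H id).
  apply: filter_from_filter; first by exists B0.
  by move=> A B HA HB; exists (A `&` B); [exact: HI|].
have pH : ProperFilter (filter_from H id).
  by apply: filter_from_proper => A HA; apply/set0P/eqP => A0; apply: H0; rewrite -A0.
have [B1 HB1 sB1] := HK set0 (countable0 _).
have [p [_ clp]] := cK _ pH (ex_intro2 _ _ B1 HB1 (fun x B1x => (sB1 x B1x).1)).
exists p => B HB O [U [E [oU cE ->]]] [Up nEp].
have [B' HB' sB'] := HK E cE.
have nU : nbhs p U by apply: open_nbhs_nbhs.
have HBB' : filter_from H id (B `&` B') by exists (B `&` B'); [exact: HI|].
have [z [[Bz /sB'[_ nEz]] Uz]] := clp _ _ HBB' nU.
by exists z.
Qed.

(* Either all members of [F] share a point, or they are uncountable, even on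
   some [-k, k], and the co-countable trace on [-k, k] is the required base. *)
Lemma rho_totally_lindelof : totally_lindelof_in rho.
Proof.
move=> F fF Fcs; have [[c Fc]|common] := pselect (exists c, forall A, F A -> A c).
  by have [? ? ?] := principal_total rho c; exists (fun B => B c); split.
have free c : exists A, F A /\ ~ A c.
  apply: contrapT => nfree; apply: common; exists c => A FA.
  by apply: contrapT => nAc; apply: nfree; exists A.
have [k Fk] := stable_uncountable_bounded Fcs (free_stable_uncountable fF Fcs free).
exists (cocountable_trace F `[- k%:R, k%:R]); split.
- exact: cocountable_trace_filter_base.
- exact: cocountable_trace_stable.
- move=> H fH GH; apply: (rho_adherence_compact (@segment_compact R (- k%:R) k%:R) fH).
  have [[A0 FA0] _ _] := fF; move=> E cE; exists ((A0 `&` `[- k%:R, k%:R]) `\` E).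
    by apply: GH; exists A0, E; split.
  by move=> x [[_ ?] ?].
- exact: sub_cocountable_trace.
Qed.

End Cocountable.

Theorem theorem3p1 (R : realType) :
  is_topology (@rho R) /\ hausdorff_in (@rho R) /\ ~ regular_in (@rho R) /\
  menger_in (@rho R) /\ totally_lindelof_in (@rho R) /\ ~ alster_in (@rho R).
Proof.
split; first exact: rho_topology.
split; first exact: rho_hausdorff.
split; first exact: rho_not_regular.
split; first exact: rho_menger.
split; first exact: rho_totally_lindelof.
exact: rho_not_alster.
Qed.
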